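(* Consider the reduced (limit) problem of the repeated wage theft game with fixed strategies and time-converging worker forecasts, as described in the context. If $(a,w_H,w_L,b_H,b_L)$ is feasible for this problem, then $(a,\,w_H-b_H,\,w_L-b_L,\,0,\,0)$ is also feasible and its objective value is at least that of $(a,w_H,w_L,b_H,b_L)$ (weak dominance of the honest strategy of promising $w_i-b_i$ and stealing $0$). The dominance is strict when $a>0$ and $(b_H,b_L)\neq(0,0)$.
   Context: Fix $P>0$, $y_H>y_L\ge0$, a real number $u$ and $\gamma\in(0,1]$. Let $C:[0,1)\to\mathbb{R}$ satisfy $C(0)=0$, increasing, strictly convex, twice differentiable, $C(a)\to\infty$ as $a\to1$; let $\eta:[0,\infty)\to\mathbb{R}$ be strictly convex, increasing, twice differentiable with $\eta(0)=0$. In the repeated wage theft game, in each period $t$ the employer promises wages $w_i^t$ and steals $b_i^t$ ($i\in\{H,L\}$), and the worker, forecasting theft $\hat b_i^t$ from past thefts $b_i^1,\dots,b_i^{t-1}$, chooses effort as if receiving $(w_i^t-\hat b_i^t)^+$. A forecast is time-converging if whenever $b_i^t=b_i$ for all $t\ge t_0$, $\hat b_i^t\to b_i$ as $t\to\infty$. When the employer uses a fixed strategy $(w_H,w_L,b_H,b_L)$ in every period and the worker uses a time-converging forecast, the game reduces to the following problem: choose $a,w_H,w_L,b_H,b_L$ to maximize $a\,(Py_H-w_H+b_H-\gamma\eta(b_H))+(1-a)\,(Py_L-w_L+b_L-\gamma\eta(b_L))$ subject to $a\in\arg\max_{a'\in[0,1)}\{a'(w_H-b_H)+(1-a')(w_L-b_L)-C(a')\}$;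 $a(w_H-b_H)+(1-a)(w_L-b_L)-C(a)\ge u$; $0\le b_L\le w_L$, $0\le b_H\le w_H$; $a\in[0,1)$. *)

From Stdlib Require Import Reals Lra.
From Coquelicot Require Import Coquelicot.
Open Scope R_scope.

(* Cost of effort C : [0,1) -> R (represented as R -> R; only values on [0,1) matter). *)
Definition cost_assumptions (C : R -> R) : Prop :=
  C 0 = 0 /\
  (forall x y, 0 <= x -> x < y -> y < 1 -> C x < C y) /\
  (forall x y t, 0 <= x < 1 -> 0 <= y < 1 -> x <> y -> 0 < t < 1 ->
     C (t * x + (1 - t) * y) < t * C x + (1 - t) * C y) /\
  (forall x, 0 < x < 1 -> ex_derive C x /\ ex_derive (Derive C) x) /\
  filterlim C (at_left 1) (Rbar_locally p_infty).

Definition eta_assumptions (eta : R -> R) : Prop :=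
  eta 0 = 0 /\
  (forall x y, 0 <= x -> x < y -> eta x < eta y) /\
  (forall x y t, 0 <= x -> 0 <= y -> x <> y -> 0 < t < 1 ->
     eta (t * x + (1 - t) * y) < t * eta x + (1 - t) * eta y) /\
  (forall x, 0 < x -> ex_derive eta x /\ ex_derive (Derive eta) x).

Definition worker_payoff (C : R -> R) (wH wL bH bL a' : R) : R :=
  a' * (wH - bH) + (1 - a') * (wL - bL) - C a'.

Definition objective (P yH yL gamma : R) (eta : R -> R)
    (a wH wL bH bL : R) : R :=
  a * (P * yH - wH + bH - gamma * eta bH)
  + (1 - a) * (P * yL - wL + bL - gamma * eta bL).

Definition feasible (C : R -> R) (u : R) (a wH wL bH bL : R) : Prop :=
  0 <= a < 1 /\
  (forall a', 0 <= a' < 1 ->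
     worker_payoff C wH wL bH bL a' <= worker_payoff C wH wL bH bL a) /\
  worker_payoff C wH wL bH bL a >= u /\
  0 <= bL <= wL /\
  0 <= bH <= wH.

(* Promising w_i - b_i and stealing nothing leaves the worker's net wages, hence
   the worker's problem and participation constraint, unchanged; the employer's
   objective changes only by removing the expected theft cost
   gamma (a eta(b_H) + (1 - a) eta(b_L)), which is nonnegative, and positive when
   a > 0 and some b_i > 0 since eta(0) = 0 and eta is increasing. *)
From Stdlib Require Import Reals Lra.
From Coquelicot Require Import Coquelicot.
Open Scope R_scope.

Lemma worker_payoff_net_wages (C : R -> R) (wH wL bH bL a' : R) :
  worker_payoff C (wH - bH) (wL - bL) 0 0 a' = worker_payoff C wH wL bH bL a'.
Proof. unfold worker_payoff; ring. Qed.

Lemma feasible_net_wages (C : R -> R) (u a wH wL bH bL : R) :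
  feasible C u a wH wL bH bL -> feasible C u a (wH - bH) (wL - bL) 0 0.
Proof.
  intros (Ha & Hopt & Hu & HbL & HbH).
  unfold feasible; rewrite !worker_payoff_net_wages.
  repeat split; try lra.
  intros a' Ha'; rewrite !worker_payoff_net_wages; auto.
Qed.

Lemma objective_net_wages_sub (P yH yL gamma : R) (eta : R -> R)
    (a wH wL bH bL : R) :
  eta 0 = 0 ->
  objective P yH yL gamma eta a (wH - bH) (wL - bL) 0 0
    - objective P yH yL gamma eta a wH wL bH bL
  = gamma * (a * eta bH + (1 - a) * eta bL).
Proof. intros eta0; unfold objective; rewrite eta0; ring. Qed.

Section IncreasingFromZero.

Variable eta : R -> R.
Hypothesis eta0 : eta 0 = 0.
Hypothesis eta_incr : forall x y, 0 <= x -> x < y -> eta x < eta y.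

Lemma incr_from_zero_pos (x : R) : 0 < x -> 0 < eta x.
Proof. intros Hx; rewrite <- eta0; apply eta_incr; lra. Qed.

Lemma incr_from_zero_ge0 (x : R) : 0 <= x -> 0 <= eta x.
Proof.
  intros Hx; destruct (Req_dec x 0) as [-> | Hx0]; [lra |].
  apply Rlt_le, incr_from_zero_pos; lra.
Qed.

Lemma expected_cost_ge0 (a x y : R) :
  0 <= a <= 1 -> 0 <= x -> 0 <= y -> 0 <= a * eta x + (1 - a) * eta y.
Proof.
  intros Ha Hx Hy.
  apply Rplus_le_le_0_compat; apply Rmult_le_pos;
    try apply incr_from_zero_ge0; lra.
Qed.

Lemma expected_cost_pos (a x y : R) :
  0 < a < 1 -> 0 <= x -> 0 <= y -> (x, y) <> (0, 0) ->
  0 < a * eta x + (1 - a) * eta y.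
Proof.
  intros Ha Hx Hy Hxy.
  pose proof (incr_from_zero_ge0 x Hx); pose proof (incr_from_zero_ge0 y Hy).
  destruct (Req_dec x 0) as [-> | Hx0].
  - assert (y <> 0) by (intros ->; apply Hxy; reflexivity).
    pose proof (incr_from_zero_pos y ltac:(lra)).
    pose proof (Rmult_lt_0_compat (1 - a) (eta y) ltac:(lra) ltac:(lra)).
    pose proof (Rmult_le_pos a (eta 0) ltac:(lra) ltac:(lra)).
    lra.
  - pose proof (incr_from_zero_pos x ltac:(lra)).
    pose proof (Rmult_lt_0_compat a (eta x) ltac:(lra) ltac:(lra)).
    pose proof (Rmult_le_pos (1 - a) (eta y) ltac:(lra) ltac:(lra)).
    lra.
Qed.

End IncreasingFromZero.

Theorem theorem3 (P yH yL u gamma : R) (C eta : R -> R)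
  (HP : 0 < P) (Hy : yH > yL) (HyL : 0 <= yL)
  (Hgamma : 0 < gamma <= 1)
  (HC : cost_assumptions C) (Heta : eta_assumptions eta)
  (a wH wL bH bL : R)
  (Hfeas : feasible C u a wH wL bH bL) :
  feasible C u a (wH - bH) (wL - bL) 0 0 /\
  objective P yH yL gamma eta a (wH - bH) (wL - bL) 0 0
    >= objective P yH yL gamma eta a wH wL bH bL /\
  (0 < a -> (bH, bL) <> (0, 0) ->
   objective P yH yL gamma eta a (wH - bH) (wL - bL) 0 0
    > objective P yH yL gamma eta a wH wL bH bL).
Proof.
  destruct Heta as (eta0 & eta_incr & _).
  pose proof (objective_net_wages_sub P yH yL gamma eta a wH wL bH bL eta0)
    as Hgain.
  pose proof (feasible_net_wages C u a wH wL bH bL Hfeas) as Hhonest.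
  destruct Hfeas as (Ha & _ & _ & HbL & HbH).
  split; [exact Hhonest | split].
  - pose proof (expected_cost_ge0 eta eta0 eta_incr a bH bL
                  ltac:(lra) ltac:(lra) ltac:(lra)) as Hcost.
    pose proof (Rmult_le_pos gamma _ ltac:(lra) Hcost).
    lra.
  - intros Ha_pos Hb.
    pose proof (expected_cost_pos eta eta0 eta_incr a bH bL
                  ltac:(lra) ltac:(lra) ltac:(lra) Hb) as Hcost.
    pose proof (Rmult_lt_0_compat gamma _ ltac:(lra) Hcost).
    lra.
Qed.
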